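(* Let $\alpha>1$ be an integer with $\alpha\equiv 2\pmod 3$. Then for every positive integer $a$, $$S_3^1(a)\leq 1.3\, a^{\log_3 2},$$ where $S_3^1(a)$ is the number of integers $0\le s<a$ such that the base-$3$ representation of $\alpha^s$ contains no digit equal to $2$.
   Context: In general, for an odd prime $p$, a base-$p$ digit $d$ is large if $d\ge p/2$, and $S_p^n(a)=\#\{0\le s<a : (\alpha^s)_p\text{ contains fewer than } n \text{ large digits}\}$; for $p=3$, $n=1$ this is as stated in the claim. *)

From Stdlib Require Import Arith Reals List.
Import ListNotations.

Fixpoint digits3_aux (fuel n : nat) : list nat :=
  match fuel with
  | O => []
  | S f => match n with
           | O => []
           | _ => (n mod 3) :: digits3_aux f (n / 3)
           end
  end.

Definition digits3 (n : nat) : list nat := digits3_aux n n.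

Definition no_digit2 (n : nat) : bool :=
  forallb (fun d => negb (Nat.eqb d 2)) (digits3 n).

Definition S31 (alpha a : nat) : nat :=
  length (filter (fun s => no_digit2 (alpha ^ s)) (seq 0 a)).

From Stdlib Require Import Arith Reals Lia Lra List Bool.

(* Odd powers of alpha end in the digit 2, so only the powers beta^t of
   beta = alpha^2 count, and S(a) <= #{t < 3^m : beta^t has no digit 2} when
   a <= 2 3^m.  Write beta = 1 + 3^v w0 with 3 not dividing w0; lifting the
   exponent gives beta^(3^m) = 1 + 3^(v+m) w with 3 not dividing w.  Hence
   beta^t, beta^(t + 3^m), beta^(t + 2 3^m) agree in the digits below v + m and
   their digits at position v + m run through all residues mod 3.  By induction,
   at most 2^m exponents t < 3^m leave the digits v, ..., v + m - 1 of beta^t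
   free of 2, so S(a) <= 2^m; finally 2 < 1.3 * 2^(log_3 2). *)

Open Scope nat_scope.

Definition digit (p n : nat) : nat := (n / 3 ^ p) mod 3.

Lemma digit_0_l p : digit p 0 = 0.
Proof. unfold digit. now rewrite Nat.Div0.div_0_l. Qed.

Lemma digit_S p n : digit (S p) n = digit p (n / 3).
Proof. unfold digit. now rewrite Nat.pow_succ_r', Nat.Div0.div_div. Qed.

Lemma digit_In_digits3_aux fuel n p :
  n <= fuel -> digit p n <> 0 -> In (digit p n) (digits3_aux fuel n).
Proof.
  revert n p; induction fuel as [|fuel IH]; intros n p Hn Hd.
  - replace n with 0 in Hd by lia. now rewrite digit_0_l in Hd.
  - destruct n as [|n']; [now rewrite digit_0_l in Hd|].
    cbn [digits3_aux]. destruct p as [|p].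
    + left. unfold digit. now rewrite Nat.pow_0_r, Nat.div_1_r.
    + right. rewrite digit_S in *. apply IH; [|exact Hd].
      assert (S n' / 3 < S n') by (apply Nat.div_lt; lia). lia.
Qed.

Lemma no_digit2_digit n p : no_digit2 n = true -> digit p n <> 2.
Proof.
  unfold no_digit2, digits3. rewrite forallb_forall. intros H Hd.
  specialize (H _ (digit_In_digits3_aux n n p (le_n n) ltac:(lia))).
  now rewrite Hd in H.
Qed.

Lemma digit_add_mul_pow3 P X Y : digit P (X + 3 ^ P * Y) = (digit P X + Y) mod 3.
Proof.
  unfold digit. rewrite (Nat.mul_comm (3 ^ P) Y), Nat.div_add
    by (apply Nat.pow_nonzero; lia).
  now rewrite Nat.Div0.add_mod_idemp_l.
Qed.

Lemma digit_add_mul_pow3_lt j P X Y : j < P -> digit j (X + 3 ^ P * Y) = digit j X.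
Proof.
  intros Hj. unfold digit.
  replace (3 ^ P * Y) with (3 ^ (P - S j) * Y * 3 * 3 ^ j).
  - rewrite Nat.div_add by (apply Nat.pow_nonzero; lia). apply Nat.Div0.mod_add.
  - replace P with (P - S j + 1 + j) at 2 by lia.
    rewrite !Nat.pow_add_r, Nat.pow_1_r. ring.
Qed.

Lemma mod3_cover_2 d r : r mod 3 <> 0 ->
  d mod 3 = 2 \/ (d + r) mod 3 = 2 \/ (d + 2 * r) mod 3 = 2.
Proof.
  rewrite 2!(Nat.Div0.add_mod d), Nat.Div0.mul_mod.
  pose proof (Nat.mod_upper_bound d 3); pose proof (Nat.mod_upper_bound r 3).
  destruct (d mod 3) as [|[|[|]]], (r mod 3) as [|[|[|]]]; simpl; lia.
Qed.

Lemma pow_mod3_eq1 b t : b mod 3 = 1 -> b ^ t mod 3 = 1.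
Proof.
  intros Hb. induction t as [|t IH]; [reflexivity|].
  now rewrite Nat.pow_succ_r', Nat.Div0.mul_mod, Hb, IH.
Qed.

Lemma pow3_factor n : 0 < n -> exists v u, n = 3 ^ v * u /\ u mod 3 <> 0.
Proof.
  induction n as [n IH] using lt_wf_ind. intros Hn.
  destruct (Nat.eq_dec (n mod 3) 0) as [H0|H0].
  - pose proof (Nat.div_mod n 3 ltac:(lia)) as Hdiv. rewrite H0, Nat.add_0_r in Hdiv.
    destruct (IH (n / 3)) as [v [u [Hu Hu3]]]; [lia|lia|].
    exists (S v), u. split; [|exact Hu3]. rewrite Nat.pow_succ_r', Hdiv at 1. rewrite Hu. ring.
  - exists 0, n. split; [simpl; lia|exact H0].
Qed.

Definition no_digit2_window (lo m n : nat) : bool :=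
  forallb (fun j => negb (digit (lo + j) n =? 2)) (seq 0 m).

Lemma no_digit2_window_S lo m n : no_digit2_window lo (S m) n =
  no_digit2_window lo m n && negb (digit (lo + m) n =? 2).
Proof.
  unfold no_digit2_window. rewrite seq_S, forallb_app. simpl. now rewrite andb_true_r.
Qed.

Lemma no_digit2_window_add_mul_pow3 lo m P X Y : lo + m <= P ->
  no_digit2_window lo m (X + 3 ^ P * Y) = no_digit2_window lo m X.
Proof.
  induction m as [|m IH]; intros Hm; [reflexivity|].
  rewrite !no_digit2_window_S, IH by lia.
  now rewrite digit_add_mul_pow3_lt by lia.
Qed.

Lemma no_digit2_window_of_no_digit2 lo m n :
  no_digit2 n = true -> no_digit2_window lo m n = true.
Proof.
  intros H. apply forallb_forall. intros j _.
  apply negb_true_iff, Nat.eqb_neq, no_digit2_digit, H.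
Qed.

Fixpoint sum_below (f : nat -> nat) (n : nat) : nat :=
  match n with 0 => 0 | S k => sum_below f k + f k end.

Lemma sum_below_le f g n :
  (forall i, i < n -> f i <= g i) -> sum_below f n <= sum_below g n.
Proof.
  induction n as [|n IH]; intros H; simpl; [lia|].
  specialize (IH (fun i Hi => H i ltac:(lia))). specialize (H n ltac:(lia)). lia.
Qed.

Lemma sum_below_ext f g n :
  (forall i, i < n -> f i = g i) -> sum_below f n = sum_below g n.
Proof.
  intros H. apply Nat.le_antisymm; apply sum_below_le; intros i Hi; rewrite H; auto.
Qed.

Lemma sum_below_add f g n :
  sum_below (fun i => f i + g i) n = sum_below f n + sum_below g n.
Proof. induction n; simpl; lia. Qed.

Lemma sum_below_mul_l c f n : sum_below (fun i => c * f i) n = c * sum_below f n.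
Proof. induction n; simpl; lia. Qed.

Lemma sum_below_add_r f n k :
  sum_below f (n + k) = sum_below f n + sum_below (fun i => f (i + n)) k.
Proof.
  induction k as [|k IH]; [now rewrite !Nat.add_0_r|].
  rewrite Nat.add_succ_r. simpl. rewrite IH, (Nat.add_comm k n). lia.
Qed.

Lemma sum_below_mono f n n' : n <= n' -> sum_below f n <= sum_below f n'.
Proof. intros H. replace n' with (n + (n' - n)) by lia. rewrite sum_below_add_r. lia. Qed.

Lemma sum_below_pairs f n :
  sum_below f (2 * n) = sum_below (fun t => f (2 * t) + f (2 * t + 1)) n.
Proof.
  induction n as [|n IH]; [reflexivity|].
  replace (2 * S n) with (S (S (2 * n))) by lia.
  cbn [sum_below]. rewrite IH, Nat.add_1_r. lia.
Qed.

Lemma sum_below_thirds f n :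
  sum_below f (3 * n) = sum_below (fun t => f t + f (t + n) + f (t + 2 * n)) n.
Proof.
  replace (3 * n) with (n + n + n) by lia.
  rewrite !sum_below_add_r, !sum_below_add.
  f_equal. apply sum_below_ext. intros i _. f_equal. lia.
Qed.

Section OneModThree.

Variables (beta v w0 : nat).
Hypotheses (Hv : 1 <= v) (Hw0 : w0 mod 3 <> 0) (Hbeta : beta = 1 + 3 ^ v * w0).

Lemma beta_mod3 : beta mod 3 = 1.
Proof.
  rewrite Hbeta. replace v with (S (v - 1)) by lia.
  rewrite Nat.pow_succ_r', <- Nat.mul_assoc, Nat.mul_comm. now rewrite Nat.Div0.mod_add.
Qed.

Lemma pow_pow3_lifting m :
  exists w, beta ^ (3 ^ m) = 1 + 3 ^ (v + m) * w /\ w mod 3 <> 0.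
Proof.
  induction m as [|m [w [Hw Hw3]]].
  - exists w0. now rewrite Nat.pow_1_r, Nat.add_0_r.
  - destruct (v + m) as [|e] eqn:He; [lia|].
    exists (w + 3 * (3 ^ e * w * w + 3 ^ e * 3 ^ e * w * w * w)). split.
    + rewrite Nat.pow_succ_r', Nat.mul_comm, Nat.pow_mul_r, Hw, Nat.add_succ_r, He.
      rewrite !Nat.pow_succ_r', Nat.pow_0_r. ring.
    + now rewrite Nat.mul_comm, Nat.Div0.mod_add.
Qed.

Lemma no_digit2_window_orbit m t :
  Nat.b2n (no_digit2_window v (S m) (beta ^ t))
  + Nat.b2n (no_digit2_window v (S m) (beta ^ (t + 3 ^ m)))
  + Nat.b2n (no_digit2_window v (S m) (beta ^ (t + 2 * 3 ^ m)))
  <= 2 * Nat.b2n (no_digit2_window v m (beta ^ t)).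
Proof.
  destruct (pow_pow3_lifting m) as [w [Hw Hw3]].
  set (P := v + m) in Hw. set (X := beta ^ t).
  assert (E1 : beta ^ (t + 3 ^ m) = X + 3 ^ P * (X * w)).
  { rewrite Nat.pow_add_r, Hw. fold X. ring. }
  assert (E2 : beta ^ (t + 2 * 3 ^ m) = X + 3 ^ P * (2 * (X * w) + 3 ^ P * X * w * w)).
  { rewrite Nat.pow_add_r, (Nat.mul_comm 2), Nat.pow_mul_r, Hw, Nat.pow_2_r. fold X. ring. }
  rewrite E1, E2, !no_digit2_window_S, !no_digit2_window_add_mul_pow3 by (unfold P; lia).
  fold P. rewrite !digit_add_mul_pow3.
  destruct (no_digit2_window v m X); [rewrite !andb_true_l|simpl; lia].
  assert (Hr : (X * w) mod 3 <> 0).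
  { unfold X. rewrite Nat.Div0.mul_mod, pow_mod3_eq1 by exact beta_mod3.
    now rewrite Nat.mul_1_l, Nat.Div0.mod_mod. }
  assert (Hhigh : (digit P X + (2 * (X * w) + 3 ^ P * X * w * w)) mod 3
                  = (digit P X + 2 * (X * w)) mod 3).
  { replace P with (S (P - 1)) by (unfold P; lia). rewrite Nat.pow_succ_r'.
    replace (digit _ X + _) with (digit (S (P - 1)) X + 2 * (X * w)
      + (3 ^ (P - 1) * X * w * w) * 3) by ring.
    apply Nat.Div0.mod_add. }
  rewrite Hhigh.
  assert (Hd : digit P X mod 3 = digit P X) by apply Nat.Div0.mod_mod.
  destruct (mod3_cover_2 (digit P X) (X * w) Hr) as [H|[H|H]];
    rewrite ?Hd in H; rewrite H, Nat.eqb_refl;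
    repeat match goal with |- context [negb (?b =? 2)] => destruct (b =? 2) end;
    simpl; lia.
Qed.

Lemma sum_no_digit2_window_le m :
  sum_below (fun t => Nat.b2n (no_digit2_window v m (beta ^ t))) (3 ^ m) <= 2 ^ m.
Proof.
  induction m as [|m IH]; [reflexivity|].
  rewrite Nat.pow_succ_r', sum_below_thirds.
  apply Nat.le_trans with
    (sum_below (fun t => 2 * Nat.b2n (no_digit2_window v m (beta ^ t))) (3 ^ m)).
  - apply sum_below_le. intros t _. apply no_digit2_window_orbit.
  - rewrite sum_below_mul_l, Nat.pow_succ_r'. lia.
Qed.

End OneModThree.

Lemma S31_eq_sum_below alpha a :
  S31 alpha a = sum_below (fun s => Nat.b2n (no_digit2 (alpha ^ s))) a.
Proof.
  unfold S31. induction a as [|a IH]; [reflexivity|].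
  rewrite seq_S, filter_app, length_app, IH. simpl.
  destruct (no_digit2 (alpha ^ a)); simpl; lia.
Qed.

Lemma no_digit2_pow_odd alpha t :
  alpha mod 3 = 2 -> no_digit2 (alpha ^ (2 * t + 1)) = false.
Proof.
  intros Hmod. apply not_true_iff_false. intros H.
  apply (no_digit2_digit _ 0) in H. apply H. unfold digit.
  rewrite Nat.pow_0_r, Nat.div_1_r, Nat.pow_add_r, Nat.pow_mul_r, Nat.pow_1_r.
  rewrite Nat.Div0.mul_mod, pow_mod3_eq1, Hmod; [reflexivity|].
  now rewrite Nat.pow_2_r, Nat.Div0.mul_mod, Hmod.
Qed.

Lemma S31_le_pow2 alpha m a : 1 < alpha -> alpha mod 3 = 2 -> a <= 2 * 3 ^ m ->
  S31 alpha a <= 2 ^ m.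
Proof.
  intros H1 Hmod Ha. set (beta := alpha ^ 2).
  assert (Hbeta3 : beta mod 3 = 1) by (unfold beta; now rewrite Nat.pow_2_r, Nat.Div0.mul_mod, Hmod).
  pose proof (Nat.div_mod beta 3 ltac:(lia)) as Hdiv. rewrite Hbeta3 in Hdiv.
  assert (Hq : 0 < beta / 3).
  { assert (4 <= beta) by (unfold beta; rewrite Nat.pow_2_r; nia). lia. }
  destruct (pow3_factor _ Hq) as [v [w0 [Hq' Hw0]]].
  assert (Hbeta : beta = 1 + 3 ^ S v * w0) by (rewrite Nat.pow_succ_r'; lia).
  rewrite S31_eq_sum_below.
  eapply Nat.le_trans; [apply sum_below_mono, Ha|].
  rewrite sum_below_pairs.
  eapply Nat.le_trans; [|apply (sum_no_digit2_window_le beta (S v) w0); auto; lia].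
  apply sum_below_le. intros t _.
  rewrite no_digit2_pow_odd, Nat.add_0_r by exact Hmod.
  unfold beta. rewrite <- Nat.pow_mul_r.
  destruct (no_digit2 (alpha ^ (2 * t))) eqn:E; [|simpl; lia].
  now rewrite no_digit2_window_of_no_digit2.
Qed.

Lemma pow3_bracket a : 2 < a -> exists k, 2 * 3 ^ k < a <= 2 * 3 ^ S k.
Proof.
  intros Ha.
  assert (Hm : forall m, a <= 2 * 3 ^ m -> exists k, 2 * 3 ^ k < a <= 2 * 3 ^ S k).
  { induction m as [|m IH]; intros Hle; [simpl in Hle; lia|].
    destruct (Nat.le_gt_cases a (2 * 3 ^ m)) as [H|H]; [now apply IH|now exists m]. }
  apply (Hm a). assert (a < 3 ^ a) by (apply Nat.pow_gt_lin_r; lia). lia.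
Qed.

Open Scope R_scope.

Lemma log3_2_pos : 0 < ln 2 / ln 3.
Proof.
  pose proof ln_lt_2. assert (ln 2 < ln 3) by (apply ln_increasing; lra).
  apply Rdiv_lt_0_compat; lra.
Qed.

Lemma Rpower_pow3_log3_2 k : Rpower (3 ^ k) (ln 2 / ln 3) = 2 ^ k.
Proof.
  assert (0 < ln 3) by (rewrite <- ln_1; apply ln_increasing; lra).
  unfold Rpower. rewrite ln_pow by lra.
  replace (ln 2 / ln 3 * (INR k * ln 3)) with (INR k * ln 2) by (field; lra).
  now rewrite <- (Rpower_pow k 2) by lra.
Qed.

(* From 3^5 < 2^8 we get log_3 2 > 5/8, and (20/13)^8 < 2^5. *)
Lemma Rpower_2_log3_2_gt : 20 / 13 < Rpower 2 (ln 2 / ln 3).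
Proof.
  assert (L2 : 0 < ln 2) by (pose proof ln_lt_2; lra).
  assert (L3 : ln 2 < ln 3) by (apply ln_increasing; lra).
  assert (H58 : 5 * ln 3 < 8 * ln 2).
  { assert (H : ln (3 ^ 5) < ln (2 ^ 8)) by (apply ln_increasing; simpl; lra).
    rewrite !ln_pow in H by lra. simpl INR in H. lra. }
  assert (H85 : 8 * ln (20 / 13) < 5 * ln 2).
  { assert (H : ln ((20 / 13) ^ 8) < ln (2 ^ 5))
      by (apply ln_increasing; [apply pow_lt; lra|simpl; lra]).
    rewrite !ln_pow in H by lra. simpl INR in H. lra. }
  assert (Hc : 5 / 8 < ln 2 / ln 3).
  { apply Rmult_lt_reg_r with (ln 3); [lra|].
    replace (ln 2 / ln 3 * ln 3) with (ln 2) by (field; lra). lra. }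
  apply ln_lt_inv; [lra|apply exp_pos|].
  rewrite ln_Rpower. pose proof (Rmult_lt_compat_r (ln 2) _ _ L2 Hc). lra.
Qed.

Lemma pow2_S_le_Rpower k x : 2 * 3 ^ k <= x ->
  2 ^ S k <= 13 / 10 * Rpower x (ln 2 / ln 3).
Proof.
  intros Hx. pose proof log3_2_pos. pose proof Rpower_2_log3_2_gt.
  assert (H3k : 0 < 3 ^ k) by (apply pow_lt; lra).
  assert (Hmono : Rpower (2 * 3 ^ k) (ln 2 / ln 3) <= Rpower x (ln 2 / ln 3))
    by (apply Rle_Rpower_l; [lra|split; lra]).
  rewrite <- Rpower_mult_distr, Rpower_pow3_log3_2 in Hmono by lra.
  assert (0 < 2 ^ k) by (apply pow_lt; lra).
  simpl. nra.
Qed.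

Theorem theorem2p6 (alpha : nat) (Halpha : (1 < alpha)%nat)
  (Hmod : (alpha mod 3 = 2)%nat) (a : nat) (Ha : (0 < a)%nat) :
  INR (S31 alpha a) <= 13 / 10 * Rpower (INR a) (ln 2 / ln 3).
Proof.
  destruct (Nat.le_gt_cases a 2) as [Ha2|Ha2].
  - pose proof (S31_le_pow2 alpha 0 a Halpha Hmod ltac:(simpl; lia)) as HS.
    apply le_INR in HS.
    assert (1 <= Rpower (INR a) (ln 2 / ln 3)).
    { rewrite <- (Rpower_O (INR a)) by (apply lt_0_INR; lia).
      apply Rle_Rpower; [apply (le_INR 1); lia|left; apply log3_2_pos]. }
    simpl in HS. lra.
  - destruct (pow3_bracket a Ha2) as [k [Hlo Hhi]].
    apply Rle_trans with (INR (2 ^ S k)).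
    + apply le_INR, S31_le_pow2; assumption.
    + rewrite pow_INR. replace (INR 2) with 2 by (simpl; lra).
      apply pow2_S_le_Rpower.
      apply lt_INR in Hlo. rewrite mult_INR, pow_INR in Hlo.
      replace (INR 2) with 2 in Hlo by (simpl; lra).
      replace (INR 3) with 3 in Hlo by (simpl; lra). lra.
Qed.
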